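(* Let $\mathcal{Q}_d,\mathcal{Q}_e,\mathcal{Q}_{\mathrm{eval}}$ be quantales with operations $\odot_d,\odot_e,\odot_{\mathrm{eval}}$, and let $\phi_d:\mathcal{Q}_d\to\mathcal{Q}_{\mathrm{eval}}$, $\phi_e:\mathcal{Q}_e\to\mathcal{Q}_{\mathrm{eval}}$ be lax functions. Then: (i) (Heterogeneous series) Let $\mathcal{R}$ be a $\mathcal{Q}_d$-category, $\mathcal{F}$ a $\mathcal{Q}_e$-category, and $\mathcal{M}$ a set of objects carrying both a $\mathcal{Q}_d$-category structure and a $\mathcal{Q}_e$-category structure; let $d:\mathcal{R}\nrightarrow_{\mathcal{Q}_d}\mathcal{M}$ be a $\mathcal{Q}_d$-design problem and $e:\mathcal{M}\nrightarrow_{\mathcal{Q}_e}\mathcal{F}$ a $\mathcal{Q}_e$-design problem. Then $(d;e)(r,f):=\bigsqcup_{m\in\mathcal{M}}\phi_d(d(r,m))\odot_{\mathrm{eval}}\phi_e(e(m,f))$ is a $\mathcal{Q}_{\mathrm{eval}}$-design problem $(\phi_d)_\ast\mathcal{R}\nrightarrow(\phi_e)_\ast\mathcal{F}$. (ii) (Heterogeneous parallel) If $d:\mathcal{R}\nrightarrow_{\mathcal{Q}_d}\mathcal{F}$ is a $\mathcal{Q}_d$-design problem and $e:\mathcal{R}'\nrightarrow_{\mathcal{Q}_e}\mathcal{F}'$ is a $\mathcal{Q}_e$-design problem, then $(d\otimes e)((r,r'),(f,f')):=\phi_d(d(r,f))\odot_{\mathrm{eval}}\phi_e(e(r',f'))$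 is a $\mathcal{Q}_{\mathrm{eval}}$-design problem $(\phi_d)_\ast\mathcal{R}\otimes(\phi_e)_\ast\mathcal{R}'\nrightarrow(\phi_d)_\ast\mathcal{F}\otimes(\phi_e)_\ast\mathcal{F}'$. (iii) (Heterogeneous feedback) If $\mathcal{R},\mathcal{F},\mathcal{M}$ are $\mathcal{Q}_d$-categories and $d:\mathcal{R}\otimes\mathcal{M}\nrightarrow_{\mathcal{Q}_d}\mathcal{F}\otimes\mathcal{M}$ is a $\mathcal{Q}_d$-design problem, then $\mathrm{Tr}_{\mathcal{M}}(d)(r,f):=\bigsqcup_{m,m'\in\mathcal{M}}\phi_d(d((r,m),(f,m')))\odot_{\mathrm{eval}}\phi_d(\mathcal{M}(m,m'))$ is a $\mathcal{Q}_{\mathrm{eval}}$-design problem $(\phi_d)_\ast\mathcal{R}\nrightarrow(\phi_d)_\ast\mathcal{F}$.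
   Context: A quantale $(Q,\sqsubseteq,\odot,e)$ is a complete lattice (arbitrary joins $\bigsqcup$) with an associative, commutative operation $\odot$ with unit $e$ distributing over arbitrary joins. A $\mathcal{Q}$-category $\mathcal{C}$ is a set $\mathrm{Ob}(\mathcal{C})$ with values $\mathcal{C}(x,y)\in Q$ such that $e\sqsubseteq\mathcal{C}(x,x)$ and $\mathcal{C}(x,y)\odot\mathcal{C}(y,z)\sqsubseteq\mathcal{C}(x,z)$. The tensor product $\mathcal{C}\otimes\mathcal{D}$ of $\mathcal{Q}$-categories has objects $\mathrm{Ob}(\mathcal{C})\times\mathrm{Ob}(\mathcal{D})$ and values $\mathcal{C}(c,c')\odot\mathcal{D}(d,d')$. A $\mathcal{Q}$-design problem $d:\mathcal{R}\nrightarrow_{\mathcal{Q}}\mathcal{F}$ between $\mathcal{Q}$-categories is a function $d:\mathrm{Ob}(\mathcal{R})\times\mathrm{Ob}(\mathcal{F})\to Q$ with $\mathcal{F}(f^\ast,f)\odot d(r,f)\odot\mathcal{R}(r,r^\ast)\sqsubseteq d(r^\ast,f^\ast)$ for all $f,f^\ast\in\mathcal{F}$, $r,r^\ast\in\mathcal{R}$. A lax function $\phi:(Q,\sqsubseteq,\odot,e)\to(Q',\sqsubseteq',\odot',e')$ is a monotone map with $\phi(q_1)\odot'\phi(q_2)\sqsubseteq'\phi(q_1\odot q_2)$ and $e'\sqsubseteq'\phi(e)$. For a $\mathcal{Q}$-category $\mathcal{C}$ and lax $\phi:\mathcal{Q}\to\mathcal{Q}'$, the pushforward $\phi_\ast\mathcal{C}$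 is the $\mathcal{Q}'$-category with the same objects and values $\phi(\mathcal{C}(x,y))$. *)

From Stdlib Require Import Setoid.

Set Implicit Arguments.

(* A quantale: complete lattice (arbitrary joins of subsets) with an
   associative, commutative, unital multiplication distributing over
   arbitrary joins (distribution on the left suffices by commutativity). *)
Record quantale := Quantale {
  qcar :> Type;
  qle : qcar -> qcar -> Prop;
  qle_refl : forall x, qle x x;
  qle_trans : forall x y z, qle x y -> qle y z -> qle x z;
  qle_antisym : forall x y, qle x y -> qle y x -> x = y;
  qsup : (qcar -> Prop) -> qcar;
  qsup_ub : forall (S : qcar -> Prop) x, S x -> qle x (qsup S);
  qsup_least : forall (S : qcar -> Prop) y,
      (forall x, S x -> qle x y) -> qle (qsup S) y;
  qmul : qcar -> qcar -> qcar;
  qunit : qcar;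
  qmulA : forall x y z, qmul x (qmul y z) = qmul (qmul x y) z;
  qmulC : forall x y, qmul x y = qmul y x;
  qmul1 : forall x, qmul qunit x = x;
  qmul_sup : forall a (S : qcar -> Prop),
      qmul a (qsup S) = qsup (fun y => exists x, S x /\ y = qmul a x)
}.

Arguments qle {q}.
Arguments qsup {q}.
Arguments qmul {q}.
Arguments qunit {q}.
Arguments qmulC {q}.
Arguments qmulA {q}.
Arguments qmul1 {q}.

Definition qjoin (Q : quantale) (I : Type) (f : I -> Q) : Q :=
  qsup (fun q => exists i, q = f i).

Lemma qmul_monor (Q : quantale) (c a b : Q) :
  qle a b -> qle (qmul c a) (qmul c b).
Proof.
  intro Hab.
  set (S := fun x : Q => x = a \/ x = b).
  assert (HS : qsup S = b).
  { apply qle_antisym.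
    - apply qsup_least. intros x [->| ->]; [exact Hab | apply qle_refl].
    - apply qsup_ub. right; reflexivity. }
  rewrite <- HS, qmul_sup. apply qsup_ub. exists a. split; [left; reflexivity | reflexivity].
Qed.

Lemma qmul_mono (Q : quantale) (a b c d : Q) :
  qle a b -> qle c d -> qle (qmul a c) (qmul b d).
Proof.
  intros H1 H2. apply qle_trans with (qmul a d).
  - apply qmul_monor; exact H2.
  - rewrite (qmulC a), (qmulC b). apply qmul_monor; exact H1.
Qed.

Record qcat (Q : quantale) (X : Type) := QCat {
  hom :> X -> X -> Q;
  hom_refl : forall x, qle qunit (hom x x);
  hom_trans : forall x y z, qle (qmul (hom x y) (hom y z)) (hom x z)
}.

Definition lax (Q Q' : quantale) (phi : Q -> Q') : Prop :=
  (forall a b, qle a b -> qle (phi a) (phi b)) /\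
  (forall a b, qle (qmul (phi a) (phi b)) (phi (qmul a b))) /\
  qle qunit (phi qunit).

Arguments lax {Q Q'} phi.

Definition pushforward (Q Q' : quantale) (phi : Q -> Q') (Hphi : lax phi)
  (X : Type) (C : qcat Q X) : qcat Q' X.
Proof.
  refine (@QCat Q' X (fun x y => phi (C x y)) _ _).
  - intro x. destruct Hphi as [Hm [_ Hu]].
    eapply qle_trans; [exact Hu | apply Hm, hom_refl].
  - intros x y z. destruct Hphi as [Hm [Hl _]].
    eapply qle_trans; [apply Hl | apply Hm, hom_trans].
Defined.

Lemma qmul_swap (Q : quantale) (a b c d : Q) :
  qmul (qmul a b) (qmul c d) = qmul (qmul a c) (qmul b d).
Proof.
  rewrite <- !qmulA. f_equal. rewrite !qmulA. f_equal. apply qmulC.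
Qed.

Definition tensor (Q : quantale) (X Y : Type) (C : qcat Q X) (D : qcat Q Y)
  : qcat Q (X * Y).
Proof.
  refine (@QCat Q (X * Y) (fun p q => qmul (C (fst p) (fst q)) (D (snd p) (snd q))) _ _).
  - intro p. rewrite <- (qmul1 (qunit : Q)) at 1.
    apply qmul_mono; apply hom_refl.
  - intros p q r. rewrite qmul_swap. apply qmul_mono; apply hom_trans.
Defined.

Definition design_problem (Q : quantale) (R F : Type)
  (CR : qcat Q R) (CF : qcat Q F) (d : R -> F -> Q) : Prop :=
  forall (f fs : F) (r rs : R),
    qle (qmul (qmul (CF fs f) (d r f)) (CR r rs)) (d rs fs).

Arguments qjoin {Q I} f.
Arguments design_problem {Q R F} CR CF d.
Arguments pushforward {Q Q' phi} Hphi {X} C.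
Arguments tensor {Q X Y} C D.

(* Each of the three operations already builds a design problem inside a
   single quantale, and series composition even allows two different
   categories on the intermediate objects.  A lax function pushes design
   problems forward, and since [phi a * phi b <= phi (a * b)] the tensor of
   two pushforwards is hom-wise below the pushforward of the tensor, which
   only weakens the design-problem inequality.  The heterogeneous operations
   are therefore the homogeneous ones in the evaluation quantale, applied to
   pushed-forward design problems. *)

Section QuantaleFacts.

Context {Q : quantale}.
Implicit Types a b c x y : Q.

Lemma qmulAC a b c : qmul (qmul a b) c = qmul (qmul a c) b.
Proof. now rewrite <- !qmulA, (qmulC b). Qed.

Lemma qle_mulr_unit x a : qle qunit a -> qle x (qmul x a).
Proof.
  intro Ha. rewrite <- (qmul1 x) at 1. rewrite (qmulC qunit).
  now apply qmul_monor.
Qed.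

Lemma qle_mull_unit x a : qle qunit a -> qle x (qmul a x).
Proof. rewrite qmulC. apply qle_mulr_unit. Qed.

Lemma qle_qjoin {I : Type} {f : I -> Q} {x} i : qle x (f i) -> qle x (qjoin f).
Proof.
  intro Hx. apply qle_trans with (f i); [exact Hx|].
  apply qsup_ub. now exists i.
Qed.

Lemma qmul_qjoin_le {I : Type} {f : I -> Q} {c y} :
  (forall i, qle (qmul c (f i)) y) -> qle (qmul c (qjoin f)) y.
Proof.
  intro Hf. unfold qjoin. rewrite qmul_sup. apply qsup_least.
  intros _ [_ [[i ->] ->]]. apply Hf.
Qed.

Lemma qmul_qjoin_sandwich_le {I : Type} {f : I -> Q} {a b y} :
  (forall i, qle (qmul (qmul a (f i)) b) y) ->
  qle (qmul (qmul a (qjoin f)) b) y.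
Proof.
  intro Hf. rewrite qmulAC. apply qmul_qjoin_le. intro i.
  rewrite <- qmulAC. apply Hf.
Qed.

End QuantaleFacts.

Section LaxFacts.

Context {Q Q' : quantale} {phi : Q -> Q'} (Hphi : lax phi).

Lemma lax_mono a b : qle a b -> qle (phi a) (phi b).
Proof. apply Hphi. Qed.

Lemma lax_mul a b : qle (qmul (phi a) (phi b)) (phi (qmul a b)).
Proof. apply Hphi. Qed.

Lemma lax_mul_le a b c : qle (qmul a b) c -> qle (qmul (phi a) (phi b)) (phi c).
Proof. intro Hc. eapply qle_trans; [apply lax_mul | now apply lax_mono]. Qed.

Lemma tensor_pushforward_le {X Y : Type} (C : qcat Q X) (D : qcat Q Y) p q :
  qle (tensor (pushforward Hphi C) (pushforward Hphi D) p q)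
      (pushforward Hphi (tensor C D) p q).
Proof. apply lax_mul. Qed.

Lemma design_problem_pushforward {R F : Type} {CR : qcat Q R} {CF : qcat Q F}
  {d : R -> F -> Q} :
  design_problem CR CF d ->
  design_problem (pushforward Hphi CR) (pushforward Hphi CF)
                 (fun r f => phi (d r f)).
Proof.
  intros Hdp f fs r rs. simpl.
  eapply qle_trans; [apply qmul_mono; [apply lax_mul | apply qle_refl]|].
  apply lax_mul_le, Hdp.
Qed.

End LaxFacts.

Section DesignProblems.

Context {Q : quantale}.

Lemma design_problem_hom_le {R F : Type} {CR CR' : qcat Q R} {CF CF' : qcat Q F}
  {d : R -> F -> Q} :
  (forall r rs, qle (CR' r rs) (CR r rs)) ->
  (forall f fs, qle (CF' f fs) (CF f fs)) ->
  design_problem CR CF d -> design_problem CR' CF' d.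
Proof.
  intros HR HF Hdp f fs r rs. eapply qle_trans; [|apply Hdp].
  apply qmul_mono; [apply qmul_mono|]; auto using qle_refl.
Qed.

Lemma design_problem_precomp {R F : Type} {CR : qcat Q R} {CF : qcat Q F}
  {d : R -> F -> Q} r rs f :
  design_problem CR CF d -> qle (qmul (d r f) (CR r rs)) (d rs f).
Proof.
  intro Hdp. eapply qle_trans; [|apply (Hdp f f)].
  apply qmul_mono; [apply qle_mull_unit, hom_refl | apply qle_refl].
Qed.

Lemma design_problem_postcomp {R F : Type} {CR : qcat Q R} {CF : qcat Q F}
  {d : R -> F -> Q} r f fs :
  design_problem CR CF d -> qle (qmul (CF fs f) (d r f)) (d r fs).
Proof.
  intro Hdp. eapply qle_trans; [|apply (Hdp f fs r r)].
  apply qle_mulr_unit, hom_refl.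
Qed.

Lemma design_problem_series {R M F : Type} {CR : qcat Q R} {CM CM' : qcat Q M}
  {CF : qcat Q F} {d : R -> M -> Q} {e : M -> F -> Q} :
  design_problem CR CM d -> design_problem CM' CF e ->
  design_problem CR CF (fun r f => qjoin (fun m => qmul (d r m) (e m f))).
Proof.
  intros Hdp Hep f fs r rs.
  apply qmul_qjoin_sandwich_le. intro m. apply (qle_qjoin m).
  (* regroup as [(d r m * CR r rs) * (CF fs f * e m f)] *)
  rewrite qmulA, qmulAC, (qmulC (CF fs f)), (qmulAC (d r m)), <- qmulA.
  apply qmul_mono.
  - exact (design_problem_precomp r rs m Hdp).
  - exact (design_problem_postcomp m f fs Hep).
Qed.

Lemma design_problem_tensor {R F R' F' : Type} {CR : qcat Q R} {CF : qcat Q F}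
  {CR' : qcat Q R'} {CF' : qcat Q F'} {d : R -> F -> Q} {e : R' -> F' -> Q} :
  design_problem CR CF d -> design_problem CR' CF' e ->
  design_problem (tensor CR CR') (tensor CF CF')
    (fun rr ff => qmul (d (fst rr) (fst ff)) (e (snd rr) (snd ff))).
Proof.
  intros Hdp Hep f fs r rs. simpl. rewrite (qmul_swap _ (CF _ _)), qmul_swap.
  apply qmul_mono; [apply Hdp | apply Hep].
Qed.

Lemma design_problem_trace {R F M : Type} {CR : qcat Q R} {CF : qcat Q F}
  {CM : qcat Q M} {d : R * M -> F * M -> Q} :
  design_problem (tensor CR CM) (tensor CF CM) d ->
  design_problem CR CF (fun r f => qjoin (fun mm : M * M =>
     qmul (d (r, fst mm) (f, snd mm)) (CM (fst mm) (snd mm)))).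
Proof.
  intros Hdp f fs r rs.
  apply qmul_qjoin_sandwich_le. intros [m m']. apply (qle_qjoin (m, m')). simpl.
  rewrite qmulA, qmulAC. apply qmul_mono; [|apply qle_refl].
  eapply qle_trans; [|apply (Hdp (f, m') (fs, m') (r, m) (rs, m))]. simpl.
  apply qmul_mono; [apply qmul_mono; [|apply qle_refl]|];
    apply qle_mulr_unit, hom_refl.
Qed.

End DesignProblems.

Theorem theorem2 (Qd Qe Qeval : quantale)
  (phid : Qd -> Qeval) (phie : Qe -> Qeval)
  (Hd : lax phid) (He : lax phie) :
  (* (i) heterogeneous series *)
  (forall (R F M : Type) (CR : qcat Qd R) (CF : qcat Qe F)
          (CMd : qcat Qd M) (CMe : qcat Qe M)
          (d : R -> M -> Qd) (e : M -> F -> Qe),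
      design_problem CR CMd d -> design_problem CMe CF e ->
      design_problem (pushforward Hd CR) (pushforward He CF)
        (fun r f => qjoin (fun m : M => qmul (phid (d r m)) (phie (e m f))))) /\
  (* (ii) heterogeneous parallel *)
  (forall (R F R' F' : Type) (CR : qcat Qd R) (CF : qcat Qd F)
          (CR' : qcat Qe R') (CF' : qcat Qe F')
          (d : R -> F -> Qd) (e : R' -> F' -> Qe),
      design_problem CR CF d -> design_problem CR' CF' e ->
      design_problem (tensor (pushforward Hd CR) (pushforward He CR'))
                     (tensor (pushforward Hd CF) (pushforward He CF'))
        (fun rr ff => qmul (phid (d (fst rr) (fst ff))) (phie (e (snd rr) (snd ff))))) /\
  (* (iii) heterogeneous feedback *)
  (forall (R F M : Type) (CR : qcat Qd R) (CF : qcat Qd F) (CM : qcat Qd M)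
          (d : R * M -> F * M -> Qd),
      design_problem (tensor CR CM) (tensor CF CM) d ->
      design_problem (pushforward Hd CR) (pushforward Hd CF)
        (fun r f => qjoin (fun mm : M * M =>
           qmul (phid (d (r, (fst mm)) (f, (snd mm)))) (phid (CM (fst mm) (snd mm)))))).
Proof.
  split; [|split].
  - intros R F M CR CF CMd CMe d e Hdp Hep.
    exact (design_problem_series (design_problem_pushforward Hd Hdp)
                                 (design_problem_pushforward He Hep)).
  - intros R F R' F' CR CF CR' CF' d e Hdp Hep.
    exact (design_problem_tensor (design_problem_pushforward Hd Hdp)
                                 (design_problem_pushforward He Hep)).
  - intros R F M CR CF CM d Hdp.
    exact (design_problem_trace
             (design_problem_hom_le (tensor_pushforward_le Hd CR CM)
                                    (tensor_pushforward_le Hd CF CM)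
                                    (design_problem_pushforward Hd Hdp))).
Qed.
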